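(* Let $\omega=\sum_{\mu,\nu}\omega_{\mu\nu}\zeta^{\alpha_\mu}\otimes\zeta^{\alpha_\nu}\in\mathfrak h\otimes\mathfrak h$. Suppose that for all $i\ne j$ in $\Gamma$, $$\sum_{k=0}^{1-a_{ij}}(-1)^k\begin{bmatrix}1-a_{ij}\\k\end{bmatrix}_q\,q^{k(\omega_{ji}-\omega_{ij})}=0.$$ This condition is equivalent to $\omega_{ij}-\omega_{ji}\in\{a_{ij},a_{ij}+2,\dots,-a_{ij}\}$ for all $i\ne j$. Then for every $(a_i)_{i\in\Gamma}\in\mathbb C^{\Gamma}$: - there is a unique character $\epsilon$ (unital algebra homomorphism to $\mathbb C$) of $U_q(\mathfrak n_+)^{\omega}$ with $\epsilon(\tilde e_i)=a_i$ for all $i$; and - there is a unique character of $U_q(\mathfrak n_-)^{\omega}$ taking the value $a_i$ on $\tilde f_i$ for all $i$. In particular, the sets of characters of $U_q(\mathfrak n_\pm)^{\omega}$ are in bijection with $\mathbb C^{\Gamma}$.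
   Context: Setting. - $0<|q|<1$. - $\mathfrak g$ is a finite simple simply-laced or non-twisted simply-laced affine Kac–Moody algebra, with simple roots $\alpha_i$ ($i\in\Gamma$), Cartan matrix $a_{ij}=\alpha_j(h_{\alpha_i})$, and Cartan subalgebra $\mathfrak h$. - $\{\zeta^{\alpha_\mu}\}$ is the basis of $\mathfrak h$ dual to the coroots $\{h_{\alpha_\mu}\}$ (in the affine case the index set includes $d$, with $\zeta^{\alpha_d}=c$ dual to $d$). Thus $\alpha_i(\zeta^{\alpha_j})=\delta_{ij}$ for $i,j\in\Gamma$. - $U_q(\mathfrak g)$ is the quantized enveloping algebra with generators $e_i,f_i$ and $q^{h}$ ($h\in\mathfrak h$), with $q^he_iq^{-h}=q^{\alpha_i(h)}e_i$, $q^hf_iq^{-h}=q^{-\alpha_i(h)}f_i$, and the quantum Serre relations among the $e_i$ and among the $f_i$. - $\begin{bmatrix}n\\k\end{bmatrix}_q$ is the symmetric Gaussian binomial $[n]_q!/([k]_q![n-k]_q!)$ with $[n]_q=(q^n-q^{-n})/(q-q^{-1})$. Twisted subalgebras. For $\omega\in\mathfrak h\otimes\mathfrak h$, put $(\alpha_i\otimes\mathrm{id})(\omega)=\sum_\nu\omega_{i\nu}\zeta^{\alpha_\nu}\in\mathfrak h$. - $U_q(\mathfrak n_+)^{\omega}$ is the subalgebra of $U_q(\mathfrak b_+)$ generated by $\tilde e_i=q^{-(\alpha_i\otimes\mathrm{id})(\omega)}e_i$, $i\in\Gamma$. - $U_q(\mathfrak n_-)^{\omega}$ is the subalgebra of $U_q(\mathfrak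 b_-)$ generated by $\tilde f_i=f_i\,q^{(\alpha_i\otimes\mathrm{id})(\omega)}$, $i\in\Gamma$. *)

From HB Require Import structures.
From mathcomp Require Import all_boot all_order all_algebra.
Set Implicit Arguments. Unset Strict Implicit. Unset Printing Implicit Defensive.
Import Order.TTheory GRing.Theory Num.Theory.
Local Open Scope ring_scope.

Definition is_GCM n (A : 'M[int]_n) : Prop :=
  (forall i, A i i = 2) /\
  (forall i j, i != j -> A i j <= 0) /\
  (forall i j, A i j = 0 <-> A j i = 0).

(* simply-laced: symmetric *)
Definition is_symmetric_mx n (A : 'M[int]_n) : Prop := A^T = A.

Definition is_indecomposable n (A : 'M[int]_n) : Prop :=
  forall S : {set 'I_n}, S != set0 -> S != setT ->
    exists i j, i \in S /\ j \notin S /\ A i j != 0.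

Definition ratmx n (A : 'M[int]_n) : 'M[rat]_n := map_mx (fun z => z%:~R) A.

Definition qform n (A : 'M[int]_n) (v : 'rV[rat]_n) : rat :=
  (v *m ratmx A *m v^T) 0 0.

(* finite type: positive definite (for symmetric indecomposable GCMs) *)
Definition is_finite_type n (A : 'M[int]_n) : Prop :=
  forall v : 'rV[rat]_n, v != 0 -> 0 < qform A v.

Definition is_affine_type n (A : 'M[int]_n) : Prop :=
  (forall v : 'rV[rat]_n, 0 <= qform A v) /\ \rank (ratmx A) = n.-1.

(* Cartan matrix of a finite simple simply-laced Lie algebra (aff = false)
   or of a non-twisted simply-laced affine Kac-Moody algebra (aff = true). *)
Definition simply_laced_cartan (aff : bool) n (A : 'M[int]_n) : Prop :=
  (0 < n)%N /\ is_GCM A /\ is_symmetric_mx A /\ is_indecomposable A /\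
  (if aff then is_affine_type A else is_finite_type A).

(* ---------- the Cartan subalgebra h ----------
   h has the basis zeta^{alpha_mu}, mu in 'I_(n + aff): the first n indices
   are Gamma, the last one (present iff aff) is d, with zeta^{alpha_d} = c.
   An element of h is its row of coordinates in this basis.
   Since alpha_i(zeta^{alpha_j}) = delta_ij and alpha_i(c) = 0,
   alpha_i(h) is the i-th coordinate of h. *)
Definition hdim n (aff : bool) : nat := (n + aff)%N.

Definition gam n (aff : bool) (i : 'I_n) : 'I_(hdim n aff) :=
  widen_ord (leq_addr aff n) i.

Definition alpha (C : fieldType) n aff (i : 'I_n) (h : 'rV[C]_(hdim n aff)) : C :=
  h 0 (gam aff i).

Definition qint (C : fieldType) (q : C) (k : nat) : C :=
  (q ^+ k - q ^- k) / (q - q^-1).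
Definition qfact (C : fieldType) (q : C) (k : nat) : C :=
  \prod_(1 <= l < k.+1) qint q l.
Definition qbinom (C : fieldType) (q : C) (N k : nat) : C :=
  qfact q N / (qfact q k * qfact q (N - k)).

(* 1 - a_ij as a natural number (a_ij <= 0 for i <> j) *)
Definition serreN n (A : 'M[int]_n) (i j : 'I_n) : nat := absz (1 - A i j).

(* "q^z" for z in C: a chosen homomorphism (C,+) -> (C^*, .) with q^1 = q *)
Definition is_qpower (C : fieldType) (q : C) (qp : C -> C) : Prop :=
  (forall x y, qp (x + y) = qp x * qp y) /\ qp 1 = q.

Definition is_alg_hom (C : fieldType) (U V : algType C) (f : U -> V) : Prop :=
  (forall x y, f (x + y) = f x + f y) /\
  (forall (c : C) x, f (c *: x) = c *: f x) /\
  (forall x y, f (x * y) = f x * f y) /\ f 1 = 1.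

(* ---------- defining relations of U_q(b_+) (sgn = false)
                and of U_q(b_-) (sgn = true) ----------
   generators x_i (= e_i, resp. f_i) and K h (= q^h), h in h. *)
Definition Uqb_rels (C : fieldType) (q : C) (qp : C -> C) (sgn : bool)
    n aff (A : 'M[int]_n) (U : algType C)
    (x : 'I_n -> U) (K : 'rV[C]_(hdim n aff) -> U) : Prop :=
  K 0 = 1 /\
  (forall h h', K (h + h') = K h * K h') /\
  (forall h i, K h * x i * K (- h) =
               qp ((-1) ^+ sgn * alpha i h) *: x i) /\
  (forall i j, i != j ->
     \sum_(k < (serreN A i j).+1)
        ((-1) ^+ k * qbinom q (serreN A i j) k) *:
          (x i ^+ (serreN A i j - k) * x j * x i ^+ k) = 0).

(* (U, x, K) is U_q(b_+) (sgn = false) resp. U_q(b_-) (sgn = true):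
   the algebra presented by the above generators and relations,
   expressed through its universal property. *)
Definition is_Uqb (C : fieldType) (q : C) (qp : C -> C) (sgn : bool)
    n aff (A : 'M[int]_n) (U : algType C)
    (x : 'I_n -> U) (K : 'rV[C]_(hdim n aff) -> U) : Prop :=
  Uqb_rels q qp sgn A x K /\
  forall (V : algType C) (y : 'I_n -> V) (L : 'rV[C]_(hdim n aff) -> V),
    Uqb_rels q qp sgn A y L ->
    (exists f : U -> V, is_alg_hom f /\ (forall i, f (x i) = y i) /\
                        (forall h, f (K h) = L h)) /\
    (forall f g : U -> V, is_alg_hom f -> is_alg_hom g ->
       (forall i, f (x i) = g (x i)) -> (forall h, f (K h) = g (K h)) ->
       forall u, f u = g u).

Definition subalg_closed (C : fieldType) (U : algType C) (S : U -> Prop) : Prop :=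
  S 1 /\ (forall u v, S u -> S v -> S (u + v)) /\
  (forall (c : C) u, S u -> S (c *: u)) /\
  (forall u v, S u -> S v -> S (u * v)).

Definition gen_subalg (C : fieldType) (U : algType C) (I : Type) (g : I -> U)
    (u : U) : Prop :=
  forall S : U -> Prop, subalg_closed S -> (forall i, S (g i)) -> S u.

(* a character (unital algebra homomorphism to C) of the subalgebra N,
   given as a function on U whose restriction to N is the character *)
Definition is_character (C : fieldType) (U : algType C) (N : U -> Prop)
    (eps : U -> C) : Prop :=
  eps 1 = 1 /\
  (forall u v, N u -> N v -> eps (u + v) = eps u + eps v) /\
  (forall (c : C) u, N u -> eps (c *: u) = c * eps u) /\
  (forall u v, N u -> N v -> eps (u * v) = eps u * eps v).

(* twisted generators:  e~_i = q^{-(alpha_i (x) id)(omega)} e_i,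
                        f~_i = f_i q^{(alpha_i (x) id)(omega)}  *)
Definition omega_i (C : fieldType) n aff (w : 'M[C]_(hdim n aff)) (i : 'I_n)
  : 'rV[C]_(hdim n aff) := row (gam aff i) w.

Definition et (C : fieldType) n aff (w : 'M[C]_(hdim n aff)) (U : algType C)
    (e : 'I_n -> U) (K : 'rV[C]_(hdim n aff) -> U) (i : 'I_n) : U :=
  K (- omega_i w i) * e i.

Definition ft (C : fieldType) n aff (w : 'M[C]_(hdim n aff)) (U : algType C)
    (f : 'I_n -> U) (K : 'rV[C]_(hdim n aff) -> U) (i : 'I_n) : U :=
  f i * K (omega_i w i).

Definition twisted_serre_cond (C : fieldType) (q : C) (qp : C -> C)
    n aff (A : 'M[int]_n) (w : 'M[C]_(hdim n aff)) (i j : 'I_n) : Prop :=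
  \sum_(k < (serreN A i j).+1)
     (-1) ^+ k * qbinom q (serreN A i j) k *
       qp (k%:R * (w (gam aff j) (gam aff i) - w (gam aff i) (gam aff j))) = 0.

From Pilot Require Import Defs.
From HB Require Import structures.
From mathcomp Require Import all_boot all_order all_algebra.
From mathcomp Require Import boolp ring.
Import Order.TTheory GRing.Theory Num.Theory.
Local Open Scope ring_scope.
Set Implicit Arguments. Unset Strict Implicit. Unset Printing Implicit Defensive.

(* Existence of the characters is proved by an explicit representation of
   U_q(b_pm) on the space of all functions of a point p in h^* (a coordinate
   row p_mu).  With <p, h> := sum_mu p_mu h_mu, the Cartan part acts by
   multiplication, q^h |-> q^{-+<p, h>}, and the generator x_i by the weighted
   shift  f |-> b_i q^{-<p, omega_i>} f(p + e_i),  omega_i := (alpha_i (x) id)(omega).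
   The weights make two such shifts q-commute, x_j x_i = q^{omega_ji - omega_ij} x_i x_j,
   so the Serre relations of U_q(b_pm) reduce exactly to the scalar hypothesis
   of the theorem.  In this representation the twisted generator e~_i (resp.
   f~_i) acts as a plain shift times a_i, hence maps constant functions to
   constant functions; so the whole twisted subalgebra preserves the constants,
   and "apply to the constant 1, evaluate at 0" is the required character.
   Uniqueness holds because a character of a generated subalgebra is determined
   by its values on the generators. *)

Section LinearOperators.
Variables (C : fieldType) (m : nat).

Definition point := 'I_m -> C.
Definition fspace := point -> C.

Definition is_linear_op (l : fspace -> fspace) : Prop :=
  (forall f g p, l (fun r => f r + g r) p = l f p + l g p) /\
  (forall c f p, l (fun r => c * f r) p = c * l f p).

Record linop := Linop { lfun :> fspace -> fspace; lfunP : is_linear_op lfun }.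

Lemma linop_eq (x y : linop) : (forall f p, x f p = y f p) -> x = y.
Proof.
case: x y => [fx Hx] [fy Hy] /= Exy.
have Efun : fx = fy by apply/funext => f; apply/funext => p; exact: Exy.
by subst; congr Linop; exact: Prop_irrelevance.
Qed.

(* The algebra structures require a choice type; classically every type is one. *)
HB.instance Definition _ := gen_eqMixin linop.
HB.instance Definition _ := gen_choiceMixin linop.

Lemma lin_add (x : linop) f g p : x (fun r => f r + g r) p = x f p + x g p.
Proof. by case: (lfunP x) => ->. Qed.

Lemma lin_scale (x : linop) c f p : x (fun r => c * f r) p = c * x f p.
Proof. by case: (lfunP x) => _ ->. Qed.

Lemma lin_addf (x : linop) f g : x (fun r => f r + g r) = fun p => x f p + x g p.
Proof. by apply/funext => p; rewrite lin_add. Qed.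

Lemma lin_scalef (x : linop) c f : x (fun r => c * f r) = fun p => c * x f p.
Proof. by apply/funext => p; rewrite lin_scale. Qed.

Definition const1 : fspace := fun _ => 1.

Lemma lin_const (x : linop) c : x (fun _ => c) = fun p => c * x const1 p.
Proof.
rewrite -lin_scalef; congr (lfun x _).
by apply/funext => r; rewrite /const1 mulr1.
Qed.

Fact zero_linear : is_linear_op (fun _ _ => 0).
Proof. by split=> *; rewrite ?addr0 ?mulr0. Qed.

Fact add_linear (x y : linop) : is_linear_op (fun f p => x f p + y f p).
Proof. by split=> *; rewrite !(lin_add, lin_scale) (addrACA, mulrDr). Qed.

Fact opp_linear (x : linop) : is_linear_op (fun f p => - x f p).
Proof. by split=> *; rewrite !(lin_add, lin_scale) (opprD, mulrN). Qed.

Fact id_linear : is_linear_op id.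
Proof. by []. Qed.

Fact comp_linear (x y : linop) : is_linear_op (fun f => x (y f)).
Proof. by split=> *; rewrite (lin_addf, lin_scalef) (lin_add, lin_scale). Qed.

Fact scale_linear c (x : linop) : is_linear_op (fun f p => c * x f p).
Proof. by split=> *; rewrite !(lin_add, lin_scale) (mulrDr, mulrCA). Qed.

Definition lzero := Linop zero_linear.
Definition ladd x y := Linop (add_linear x y).
Definition lopp x := Linop (opp_linear x).
Definition lone := Linop id_linear.
Definition lmul x y := Linop (comp_linear x y).
Definition lscale c x := Linop (scale_linear c x).

Lemma laddA : associative ladd.
Proof. by move=> x y z; apply: linop_eq => f p /=; rewrite addrA. Qed.
Lemma laddC : commutative ladd.
Proof. by move=> x y; apply: linop_eq => f p /=; rewrite addrC. Qed.
Lemma ladd0 : left_id lzero ladd.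
Proof. by move=> x; apply: linop_eq => f p /=; rewrite add0r. Qed.
Lemma laddN : left_inverse lzero lopp ladd.
Proof. by move=> x; apply: linop_eq => f p /=; rewrite addNr. Qed.
Lemma lmulA : associative lmul.
Proof. by move=> x y z; apply: linop_eq. Qed.
Lemma lmul1 : left_id lone lmul.
Proof. by move=> x; apply: linop_eq. Qed.
Lemma lmulr1 : right_id lone lmul.
Proof. by move=> x; apply: linop_eq. Qed.
Lemma lmulDl : left_distributive lmul ladd.
Proof. by move=> x y z; apply: linop_eq. Qed.
Lemma lmulDr : right_distributive lmul ladd.
Proof. by move=> x y z; apply: linop_eq => f p /=; rewrite lin_add. Qed.

Lemma lone_neq0 : lone != lzero.
Proof.
apply/eqP => /(congr1 (fun x : linop => x (fun _ => 1) (fun _ => 0))) /=.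
by move/eqP; rewrite oner_eq0.
Qed.

HB.instance Definition _ := GRing.isNzRing.Build linop
  laddA laddC ladd0 laddN lmulA lmul1 lmulr1 lmulDl lmulDr lone_neq0.

Lemma lscaleA a b x : lscale a (lscale b x) = lscale (a * b) x.
Proof. by apply: linop_eq => f p /=; rewrite mulrA. Qed.
Lemma lscale1 : left_id 1 lscale.
Proof. by move=> x; apply: linop_eq => f p /=; rewrite mul1r. Qed.
Lemma lscaleDr : right_distributive lscale +%R.
Proof. by move=> a x y; apply: linop_eq => f p /=; rewrite mulrDr. Qed.
Lemma lscaleDl x : {morph lscale^~ x : a b / a + b}.
Proof. by move=> a b; apply: linop_eq => f p /=; rewrite mulrDl. Qed.

HB.instance Definition _ :=
  GRing.Zmodule_isLmodule.Build C linop lscaleA lscale1 lscaleDr lscaleDl.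

Lemma lscaleAl (a : C) (x y : linop) : a *: (x * y) = (a *: x) * y.
Proof. by apply: linop_eq. Qed.
HB.instance Definition _ := GRing.Lmodule_isLalgebra.Build C linop lscaleAl.

Lemma lscaleAr (a : C) (x y : linop) : a *: (x * y) = x * (a *: y).
Proof. by apply: linop_eq => f p /=; rewrite lin_scale. Qed.
HB.instance Definition _ := GRing.Lalgebra_isAlgebra.Build C linop lscaleAr.

End LinearOperators.

Arguments const1 {C m}.

Section ShiftRepresentation.
Variables (C : fieldType) (m : nat) (qp : C -> C).
Hypothesis qpD : forall x y, qp (x + y) = qp x * qp y.
Hypothesis qp0 : qp 0 = 1.

Lemma qpN x : qp x * qp (- x) = 1.
Proof. by rewrite -qpD addrN. Qed.

Definition pairing (p : point C m) (h : 'rV[C]_m) : C := \sum_(k < m) p k * h 0 k.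
Definition shift (p : point C m) (g : 'I_m) : point C m := fun k => p k + (k == g)%:R.

Lemma pairing_shift p g h : pairing (shift p g) h = pairing p h + h 0 g.
Proof.
rewrite /pairing /shift; under eq_bigr do rewrite mulrDl.
rewrite big_split /=; congr (_ + _).
rewrite (bigD1 g) //= eqxx mul1r big1 ?addr0 // => k /negbTE ->.
by rewrite mul0r.
Qed.

Lemma pairing0 p : pairing p 0 = 0.
Proof. by rewrite /pairing big1 // => k _; rewrite mxE mulr0. Qed.

Lemma pairingD p h h' : pairing p (h + h') = pairing p h + pairing p h'.
Proof. by rewrite /pairing -big_split; apply: eq_bigr => k _; rewrite mxE mulrDr. Qed.

Lemma pairingN p h : pairing p (- h) = - pairing p h.
Proof. by rewrite /pairing -sumrN; apply: eq_bigr => k _; rewrite mxE mulrN. Qed.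

Lemma shiftC p g g' : shift (shift p g) g' = shift (shift p g') g.
Proof. by apply/funext => k; rewrite /shift addrAC. Qed.

Fact Kop_linear s h : is_linear_op (fun (f : fspace C m) p => qp (s * pairing p h) * f p).
Proof. by split=> *; rewrite (mulrDr, mulrCA). Qed.

Fact Xop_linear b g v :
  is_linear_op (fun (f : fspace C m) p => b * qp (- pairing p v) * f (shift p g)).
Proof. by split=> *; rewrite (mulrDr, mulrCA). Qed.

(* q^h acts by multiplication by q^{s <p, h>} (s = -1 for b_+, s = 1 for b_-). *)
Definition Kop s h := Linop (Kop_linear s h).

Definition Xop b g v := Linop (Xop_linear b g v).

Lemma Kop0 s : Kop s 0 = 1.
Proof. by apply: linop_eq => f p /=; rewrite pairing0 mulr0 qp0 mul1r. Qed.

Lemma KopD s h h' : Kop s (h + h') = Kop s h * Kop s h'.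
Proof. by apply: linop_eq => f p /=; rewrite pairingD mulrDr qpD mulrA. Qed.

Lemma Kop_conj s b g v h :
  Kop s h * Xop b g v * Kop s (- h) = qp (- s * h 0 g) *: Xop b g v.
Proof.
apply: linop_eq => f p /=; rewrite pairingN pairing_shift.
set X := b * qp (- pairing p v).
transitivity (X * f (shift p g) * qp (s * pairing p h + s * - (pairing p h + h 0 g))).
  by rewrite qpD; ring.
by rewrite mulrC; congr (qp _ * _); ring.
Qed.

Lemma Xop_qcomm b g v b' g' v' :
  Xop b g v * Xop b' g' v' = qp (v 0 g' - v' 0 g) *: (Xop b' g' v' * Xop b g v).
Proof.
apply: linop_eq => f p /=; rewrite !pairing_shift shiftC.
set F := f _.
transitivity (b * b' * F * qp (- pairing p v + - (pairing p v' + v' 0 g))).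
  by rewrite qpD; ring.
transitivity (b * b' * F *
  qp (v 0 g' - v' 0 g + (- pairing p v' + - (pairing p v + v 0 g')))).
  by congr (_ * qp _); ring.
by rewrite !qpD; ring.
Qed.

Lemma twisted_e_shift b g v f p : (Kop (-1) (- v) * Xop b g v) f p = b * f (shift p g).
Proof. by rewrite /= pairingN mulN1r opprK mulrA mulrCA qpN mulr1. Qed.

Lemma twisted_f_shift b g v f p :
  (Xop b g v * Kop 1 v) f p = b * qp (v 0 g) * f (shift p g).
Proof.
rewrite /= pairing_shift mul1r qpD.
transitivity (b * (qp (pairing p v) * qp (- pairing p v)) * qp (v 0 g) * f (shift p g)).
  by ring.
by rewrite qpN mulr1.
Qed.

End ShiftRepresentation.

Section QSerre.
Variables (C : fieldType) (V : algType C).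

Lemma qcomm_expr (x y : V) (c : C) k :
  y * x = c *: (x * y) -> y * x ^+ k = c ^+ k *: (x ^+ k * y).
Proof.
move=> yx; elim: k => [|k IH]; first by rewrite !expr0 mulr1 mul1r scale1r.
by rewrite exprSr mulrA IH -scalerAl -[_ * y * x]mulrA yx -scalerAr scalerA mulrA -!exprSr.
Qed.

(* For q-commuting x, y every "Serre word" x^(N-k) y x^k is a multiple of
   x^N y, so a Serre-type sum vanishes once its scalar shadow does. *)
Lemma qserre (x y : V) (c : C) N (coef : nat -> C) :
  y * x = c *: (x * y) -> \sum_(k < N.+1) coef k * c ^+ k = 0 ->
  \sum_(k < N.+1) coef k *: (x ^+ (N - k) * y * x ^+ k) = 0.
Proof.
move=> yx scalar0.
transitivity (\sum_(k < N.+1) (coef k * c ^+ k) *: (x ^+ N * y)).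
  apply: eq_bigr => k _; rewrite -mulrA (qcomm_expr _ yx) -scalerAr scalerA mulrA.
  by rewrite -exprD subnK // -ltnS.
by rewrite -scaler_suml scalar0 scale0r.
Qed.

End QSerre.

Lemma qp_natmul (C : fieldType) (qp : C -> C) :
  (forall x y, qp (x + y) = qp x * qp y) -> qp 0 = 1 ->
  forall (k : nat) d, qp (k%:R * d) = qp d ^+ k.
Proof.
move=> qpD qp0; elim=> [|k IH] d; first by rewrite mul0r qp0 expr0.
by rewrite -natr1 mulrDl mul1r qpD IH exprSr.
Qed.

Lemma omega_iE (C : fieldType) n aff (w : 'M[C]_(hdim n aff)) i k :
  omega_i w i 0 k = w (gam aff i) k.
Proof. by rewrite mxE. Qed.

(* The shift operators with weights omega_i satisfy the relations of
   U_q(b_+) (s = -1, sgn = false) or U_q(b_-) (s = 1, sgn = true);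
   the Serre relations are exactly the twisted Serre condition. *)
Lemma shift_rep_rels (C : fieldType) (q : C) (qp : C -> C)
    (qpD : forall x y, qp (x + y) = qp x * qp y) (qp0 : qp 0 = 1)
    (sgn : bool) n aff (A : 'M[int]_n) (w : 'M[C]_(hdim n aff))
    (b : 'I_n -> C) (s : C) :
  - s = (-1) ^+ sgn ->
  (forall i j, i != j -> twisted_serre_cond q qp A w i j) ->
  Uqb_rels q qp sgn A (fun i => Xop qp (b i) (gam aff i) (omega_i w i)) (Kop qp s).
Proof.
move=> sgnE serre; split; first exact: Kop0.
split; first exact: KopD.
split; first by move=> h i; rewrite Kop_conj // sgnE.
move=> i j ij.
apply: (qserre (coef := fun k => (-1) ^+ k * qbinom q (serreN A i j) k)).
  exact: Xop_qcomm.
rewrite -[RHS](serre i j ij).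
by apply: eq_bigr => k _; rewrite !omega_iE (qp_natmul qpD qp0).
Qed.

Section GeneratedSubalgebra.
Variables (C : fieldType) (U : algType C) (I : Type) (g : I -> U).

Lemma gen_subalg_closed : Defs.subalg_closed (gen_subalg g).
Proof.
split; first by move=> S [].
split; first by move=> u v Nu Nv S SS Sg; case: (SS) => _ [SD _]; apply: SD;
  [exact: Nu | exact: Nv].
split; first by move=> c u Nu S SS Sg; case: (SS) => _ [_ [SZ _]]; apply: SZ;
  exact: Nu.
by move=> u v Nu Nv S SS Sg; case: (SS) => _ [_ [_ SM]]; apply: SM;
  [exact: Nu | exact: Nv].
Qed.

Lemma gen_subalg_ind (P : U -> Prop) :
  P 1 ->
  (forall u v, gen_subalg g u -> gen_subalg g v -> P u -> P v -> P (u + v)) ->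
  (forall c u, gen_subalg g u -> P u -> P (c *: u)) ->
  (forall u v, gen_subalg g u -> gen_subalg g v -> P u -> P v -> P (u * v)) ->
  (forall i, P (g i)) -> forall u, gen_subalg g u -> P u.
Proof.
move=> P1 PD PZ PM Pg u Nu; have [N1 [ND [NZ NM]]] := gen_subalg_closed.
suff [] : gen_subalg g u /\ P u by [].
apply: (Nu (fun u => gen_subalg g u /\ P u)); last first.
  by move=> i; split; [move=> S _; apply | exact: Pg].
split; first by [].
split; first by move=> x y [Nx Px] [Ny Py]; split; [exact: ND | exact: PD].
split; first by move=> c x [Nx Px]; split; [exact: NZ | exact: PZ].
by move=> x y [Nx Px] [Ny Py]; split; [exact: NM | exact: PM].
Qed.

Lemma character_unique (a : I -> C) (eps1 eps2 : U -> C) :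
  is_character (gen_subalg g) eps1 -> is_character (gen_subalg g) eps2 ->
  (forall i, eps1 (g i) = a i) -> (forall i, eps2 (g i) = a i) ->
  forall u, gen_subalg g u -> eps1 u = eps2 u.
Proof.
move=> [e1_1 [e1D [e1Z e1M]]] [e2_1 [e2D [e2Z e2M]]] e1g e2g.
apply: gen_subalg_ind => [|u v Nu Nv Eu Ev|c u Nu Eu|u v Nu Nv Eu Ev|i].
- by rewrite e1_1 e2_1.
- by rewrite e1D // e2D // Eu Ev.
- by rewrite e1Z // e2Z // Eu.
- by rewrite e1M // e2M // Eu Ev.
- by rewrite e1g e2g.
Qed.

Variables (m : nat) (phi : U -> linop C m).
Hypothesis phi_hom : is_alg_hom phi.

Definition origin : point C m := fun _ => 0.

Definition rep_character (u : U) : C := phi u const1 origin.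

Variable a : I -> C.
Hypothesis gen_const : forall i p, phi (g i) const1 p = a i.

Lemma gen_subalg_const u : gen_subalg g u -> phi u const1 = fun _ => rep_character u.
Proof.
case: phi_hom => phiD [phiZ [phiM phi1]]; move: u.
apply: (@gen_subalg_ind (fun u => phi u const1 = fun _ => rep_character u))
  => [|u v _ _ Eu Ev|c u _ Eu|u v _ _ Eu Ev|i].
- by rewrite /rep_character phi1.
- by apply/funext => p; rewrite /rep_character phiD /= Eu Ev.
- by apply/funext => p; rewrite /rep_character phiZ /= Eu.
- by apply/funext => p; rewrite /rep_character phiM /= Ev lin_const Eu.
- by apply/funext => p; rewrite /rep_character !gen_const.
Qed.

Lemma rep_character_ok :
  is_character (gen_subalg g) rep_character /\ forall i, rep_character (g i) = a i.
Proof.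
case: (phi_hom) => phiD [phiZ [phiM phi1]].
split; last by move=> i; rewrite /rep_character gen_const.
split; first by rewrite /rep_character phi1.
split; first by move=> u v _ _; rewrite /rep_character phiD.
split; first by move=> c u _; rewrite /rep_character phiZ.
move=> u v _ Nv.
by rewrite /rep_character phiM /= (gen_subalg_const Nv) lin_const mulrC.
Qed.

Lemma character_exists_unique :
  (exists eps : U -> C, is_character (gen_subalg g) eps /\ forall i, eps (g i) = a i) /\
  (forall eps1 eps2 : U -> C,
     is_character (gen_subalg g) eps1 -> is_character (gen_subalg g) eps2 ->
     (forall i, eps1 (g i) = a i) -> (forall i, eps2 (g i) = a i) ->
     forall u, gen_subalg g u -> eps1 u = eps2 u).
Proof.
split; first by exists rep_character; exact: rep_character_ok.
exact: character_unique.
Qed.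

End GeneratedSubalgebra.

Theorem mainTheorem4 (C : numClosedFieldType) (q : C) (qp : C -> C)
    (n : nat) (aff : bool) (A : 'M[int]_n) (w : 'M[C]_(hdim n aff)) :
  0 < `|q| < 1 ->
  is_qpower q qp ->
  simply_laced_cartan aff A ->
  (forall i j : 'I_n, i != j -> twisted_serre_cond q qp A w i j) ->
  forall a : 'I_n -> C,
    (forall (U : algType C) (e : 'I_n -> U) (K : 'rV[C]_(hdim n aff) -> U),
       is_Uqb q qp false A e K ->
       let N := gen_subalg (et w e K) in
       (exists eps : U -> C, is_character N eps /\
                             forall i, eps (et w e K i) = a i) /\
       (forall eps1 eps2 : U -> C,
          is_character N eps1 -> is_character N eps2 ->
          (forall i, eps1 (et w e K i) = a i) ->
          (forall i, eps2 (et w e K i) = a i) ->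
          forall u, N u -> eps1 u = eps2 u)) /\
    (forall (U : algType C) (f : 'I_n -> U) (K : 'rV[C]_(hdim n aff) -> U),
       is_Uqb q qp true A f K ->
       let N := gen_subalg (ft w f K) in
       (exists eps : U -> C, is_character N eps /\
                             forall i, eps (ft w f K i) = a i) /\
       (forall eps1 eps2 : U -> C,
          is_character N eps1 -> is_character N eps2 ->
          (forall i, eps1 (ft w f K i) = a i) ->
          (forall i, eps2 (ft w f K i) = a i) ->
          forall u, N u -> eps1 u = eps2 u)).
Proof.
move=> /andP [q_gt0 _] [qpD qp1] _ serre a.
have qp0 : qp 0 = 1.
  have q_neq0 : q != 0 by rewrite -normr_gt0.
  by apply: (mulfI q_neq0); rewrite mulr1 -qp1 -qpD addr0.
split=> U x K [_ univ] N.
- (* e~_i = q^{-omega_i} e_i acts as f |-> a_i f(p + e_i) *)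
  have sgnE : - (-1) = (-1) ^+ false :> C by rewrite opprK.
  have [[phi [phi_hom [phi_x phi_K]]] _] :=
    univ _ _ _ (@shift_rep_rels _ _ _ qpD qp0 _ _ _ A w a _ sgnE serre).
  apply: (character_exists_unique phi_hom) => i p.
  case: phi_hom => _ [_ [phiM _]].
  by rewrite /et phiM phi_K phi_x twisted_e_shift // mulr1.
- (* f~_i = f_i q^{omega_i} acts as f |-> a_i f(p + e_i) for b_i = a_i q^{-omega_ii} *)
  have sgnE : - 1 = (-1) ^+ true :> C by rewrite expr1.
  pose b i := a i * qp (- w (gam aff i) (gam aff i)).
  have [[phi [phi_hom [phi_x phi_K]]] _] :=
    univ _ _ _ (@shift_rep_rels _ _ _ qpD qp0 _ _ _ A w b _ sgnE serre).
  apply: (character_exists_unique phi_hom) => i p.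
  case: phi_hom => _ [_ [phiM _]].
  rewrite /ft phiM phi_K phi_x twisted_f_shift // omega_iE /b mulr1.
  by rewrite -mulrA [qp _ * _]mulrC qpN // mulr1.
Qed.
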